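(* Let $\mathbb{M}$ be a partial group. Then (i) $N(\mathbb{M})$ is a subgroup of $\mathbb{M}$; (ii) $Z(\mathbb{M})$ is an abelian subgroup of $\mathbb{M}$; and (iii) $\mathrm{Inn}(\mathbb{M})\cong N(\mathbb{M})/Z(\mathbb{M})$.
   Context: Partial groups are regarded as simplicial sets whose $n$-simplices are the words $[x_1|\dots|x_n]$ in the domain of the partial product (faces multiply adjacent letters or delete the first/last letter; degeneracies insert the unit); $\Pi[x_1|\dots|x_n]=[x_1\cdots x_n]$. A subgroup of $\mathbb{M}$ is a subset $H\subseteq\mathbb{M}_1$ such that every word in $H$ is a simplex, closed under products and inverses. For $\eta,x\in\mathbb{M}_1$ write ${}^{\eta}x=\eta x\eta^{-1}$ when $[\eta|x|\eta^{-1}]$ is a simplex. $N(\mathbb{M})$ is the set of $\eta\in\mathbb{M}_1$ such that (i) for every $x\in\mathbb{M}_1$, $[\eta|x|\eta^{-1}]\in\mathbb{M}$ and $x\mapsto{}^{\eta}x$ extends to an automorphism of $\mathbb{M}$; (ii) for every simplex $[x_1|\dots|x_n]$ and $0\le i\le n$, $\omega_i=[{}^{\eta}x_1|\dots|{}^{\eta}x_i|\eta|x_{i+1}|\dots|x_n]$ is a simplex and $\Pi(\omega_0)=\dots=\Pi(\omega_n)$. $Z(\mathbb{M})$ is the set of $\eta\in N(\mathbb{M})$ with ${}^{\eta}x=x$ for all $x\in\mathbb{M}_1$. An automorphism $\alpha$ of $\mathbb{M}$ (simplicial automorphism) is inner if there is a simplicial homotopy $F\colon\mathbb{M}\times\Delta[1]\to\mathbb{M}$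 from $\alpha$ to $\mathrm{Id}_{\mathbb{M}}$; $\mathrm{Inn}(\mathbb{M})$ is the group of inner automorphisms. *)

From mathcomp Require Import all_boot.
Set Implicit Arguments. Unset Strict Implicit. Unset Printing Implicit Defensive.

(* Partial groups in the sense of Chermak: a set L, a domain D of words,
   a product Pi : D -> L and an involutory inversion.  Words are seq L. *)
Record partialGroup := PartialGroup {
  pg_carrier :> Type;
  pg_dom : seq pg_carrier -> Prop;
  pg_prod : seq pg_carrier -> pg_carrier;
  pg_inv : pg_carrier -> pg_carrier;
  pg_dom_letter : forall x, pg_dom [:: x];
  pg_dom_cat : forall u v, pg_dom (u ++ v) -> pg_dom u /\ pg_dom v;
  pg_prod_letter : forall x, pg_prod [:: x] = x;
  pg_prod_assoc : forall u v w, pg_dom (u ++ v ++ w) ->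
    pg_dom (u ++ pg_prod v :: w) /\ pg_prod (u ++ v ++ w) = pg_prod (u ++ pg_prod v :: w);
  pg_invK : forall x, pg_inv (pg_inv x) = x;
  pg_dom_inv : forall w, pg_dom w ->
    pg_dom (rev (map pg_inv w) ++ w) /\ pg_prod (rev (map pg_inv w) ++ w) = pg_prod [::]
}.

Section PartialGroupDefs.
Variable M : partialGroup.
Local Notation L := (pg_carrier M).
Local Notation D := (@pg_dom M).
Local Notation Pi := (@pg_prod M).
Local Notation inv := (@pg_inv M).

Definition pg_one : L := Pi [::].

(* Simplicial structure: n-simplices are the words of length n in D. *)
Definition simplex (w : seq L) : Prop := D w.

(* Face map d_i on [x_1|...|x_n]: d_0 deletes x_1, d_n deletes x_n,
   d_i (0<i<n) replaces x_i,x_(i+1) by x_i x_(i+1). *)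
Definition face (i : nat) (w : seq L) : seq L :=
  if i == 0 then behead w
  else if i == size w then take (size w).-1 w
  else take i.-1 w ++ Pi (take 2 (drop i.-1 w)) :: drop i.+1 w.

Definition degen (i : nat) (w : seq L) : seq L :=
  take i w ++ pg_one :: drop i w.

Definition simplicial_map (f : seq L -> seq L) : Prop :=
  [/\ (forall w, D w -> D (f w) /\ size (f w) = size w),
      (forall w i, D w -> 0 < size w -> i <= size w -> f (face i w) = face i (f w)) &
      (forall w i, D w -> i <= size w -> f (degen i w) = degen i (f w))].

Definition automorphism (f : seq L -> seq L) : Prop :=
  simplicial_map f /\
  exists g, [/\ simplicial_map g,
               (forall w, D w -> g (f w) = w) &
               (forall w, D w -> f (g w) = w)].

(* Delta[1]_n = monotone maps [n] -> [1], encoded by k <= n+1, the number of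
   vertices sent to 0 (vertex j goes to 0 iff j < k).  Under this encoding
   d_i k = (if i < k then k-1 else k) and s_i k = (if i < k then k+1 else k).
   A simplicial homotopy F : M x Delta[1] -> M from f to g restricts to f on
   the vertex 0 (k = n+1) and to g on the vertex 1 (k = 0). *)
Definition simplicial_homotopy (F : seq L -> nat -> seq L) (f g : seq L -> seq L) : Prop :=
  [/\ (forall w k, D w -> k <= (size w).+1 -> D (F w k) /\ size (F w k) = size w),
      (forall w, D w -> F w (size w).+1 = f w),
      (forall w, D w -> F w 0 = g w),
      (forall w k i, D w -> 0 < size w -> k <= (size w).+1 -> i <= size w ->
          F (face i w) (if i < k then k.-1 else k) = face i (F w k)) &
      (forall w k i, D w -> k <= (size w).+1 -> i <= size w ->
          F (degen i w) (if i < k then k.+1 else k) = degen i (F w k))].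

Definition inner_aut (a : seq L -> seq L) : Prop :=
  automorphism a /\ exists F, simplicial_homotopy F a id.

Fixpoint all_in (H : L -> Prop) (w : seq L) : Prop :=
  if w is x :: w' then H x /\ all_in H w' else True.

Definition subgroup (H : L -> Prop) : Prop :=
  [/\ (forall w, all_in H w -> D w),
      (forall w, all_in H w -> H (Pi w)) &
      (forall x, H x -> H (inv x))].

Definition abelian_subgroup (H : L -> Prop) : Prop :=
  subgroup H /\ forall x y, H x -> H y -> Pi [:: x; y] = Pi [:: y; x].

Definition conj (eta x : L) : L := Pi [:: eta; x; inv eta].

Definition omega (eta : L) (w : seq L) (i : nat) : seq L :=
  map (conj eta) (take i w) ++ eta :: drop i w.

Definition normalizer (eta : L) : Prop :=
  [/\ (forall x, D [:: eta; x; inv eta]),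
      (exists a, automorphism a /\ forall x, a [:: x] = [:: conj eta x]) &
      (forall w, D w ->
         (forall i, i <= size w -> D (omega eta w i)) /\
         (forall i j, i <= size w -> j <= size w ->
             Pi (omega eta w i) = Pi (omega eta w j)))].

Definition center (eta : L) : Prop :=
  normalizer eta /\ forall x, conj eta x = x.

End PartialGroupDefs.

(* For eta in N(M), the faces d_k omega_(k-1)(w) interpolate between conjugation c_eta(w)
   and w, and they form a simplicial homotopy from c_eta to the identity; so c_eta is inner.
   Conversely, a simplicial map is determined by its action on letters (through its two outer
   faces), and a homotopy F from an automorphism a to the identity is determined in the same
   way by the single letter eta = F([1], 1) on the degenerate edge [1]: F must be the
   interpolating homotopy above, whence a = c_eta, and the face relations of F say that eta
   lies in N(M). Thus eta |-> c_eta maps N(M) onto Inn(M), multiplicatively since conjugation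
   by eta theta is c_eta after c_theta, with kernel Z(M). N(M) is closed under products
   because the omega-words of eta theta are faces of omega-words of eta applied to
   omega-words of theta, and under inverses because the omega-words of eta^-1 are inverses
   of omega-words of eta. *)

From mathcomp Require Import all_boot.
From mathcomp Require Import zify.
Set Implicit Arguments. Unset Strict Implicit. Unset Printing Implicit Defensive.

Section PartialGroupTheory.
Variable M : partialGroup.
Local Notation L := (pg_carrier M).
Local Notation D := (@pg_dom M).
Local Notation Pi := (@pg_prod M).
Local Notation inv := (@pg_inv M).
Local Notation one := (@pg_one M).

Definition winv (w : seq L) := rev (map inv w).

Lemma winv_cat u v : winv (u ++ v) = winv v ++ winv u.
Proof. by rewrite /winv map_cat rev_cat. Qed.

Lemma winvK : involutive winv.
Proof. by move=> w; rewrite /winv map_rev revK -map_comp (eq_map (@pg_invK M)) map_id. Qed.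

Lemma size_winv w : size (winv w) = size w.
Proof. by rewrite /winv size_rev size_map. Qed.

Lemma nth_winv w j : j < size w -> nth one (winv w) j = inv (nth one w (size w - j.+1)).
Proof. by move=> jw; rewrite /winv nth_rev size_map // (nth_map one) //; lia. Qed.

Lemma dom_catl u v : D (u ++ v) -> D u. Proof. by case/pg_dom_cat. Qed.
Lemma dom_catr u v : D (u ++ v) -> D v. Proof. by case/pg_dom_cat. Qed.

Lemma dom_nil : D [::].
Proof. exact: (@dom_catl [::] [:: one] (pg_dom_letter _)). Qed.

Lemma dom_assoc u v w : D (u ++ v ++ w) -> D (u ++ Pi v :: w).
Proof. by case/pg_prod_assoc. Qed.

Lemma prod_assoc u v w : D (u ++ v ++ w) -> Pi (u ++ v ++ w) = Pi (u ++ Pi v :: w).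
Proof. by case/pg_prod_assoc. Qed.

Lemma prod_cons x w : D (x :: w) -> Pi (x :: w) = Pi [:: x; Pi w].
Proof. by move=> Dxw; rewrite -(cats0 w) (@prod_assoc [:: x]) // cats0. Qed.

Lemma dom_winv_cat w : D w -> D (winv w ++ w). Proof. by case/pg_dom_inv. Qed.
Lemma prod_winv_cat w : D w -> Pi (winv w ++ w) = one. Proof. by case/pg_dom_inv. Qed.
Lemma dom_winv w : D w -> D (winv w). Proof. by move/dom_winv_cat/dom_catl. Qed.

Lemma dom_cat_winv w : D w -> D (w ++ winv w).
Proof. by move/dom_winv/dom_winv_cat; rewrite winvK. Qed.

Lemma prod_cat_winv w : D w -> Pi (w ++ winv w) = one.
Proof. by move/dom_winv/prod_winv_cat; rewrite winvK. Qed.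

Lemma insert_one u v : D (u ++ v) -> D (u ++ one :: v) /\ Pi (u ++ one :: v) = Pi (u ++ v).
Proof. by move=> Duv; have [Dins Eins] := @pg_prod_assoc M u [::] v Duv; split; last rewrite Eins. Qed.

Lemma prod_one_cons v : D v -> Pi (one :: v) = Pi v.
Proof. by case/(@insert_one [::]). Qed.

Lemma dom_one_pair x : D [:: one; x].
Proof. by have [] := @insert_one [::] [:: x] (pg_dom_letter x). Qed.

Lemma prod_one_pair x : Pi [:: one; x] = x.
Proof. by rewrite prod_one_cons ?pg_prod_letter //; apply: pg_dom_letter. Qed.

Lemma prod_pair_one x : Pi [:: x; one] = x.
Proof. by have [_ ->] := @insert_one [:: x] [::] (pg_dom_letter x); apply: pg_prod_letter. Qed.

Lemma cancel_winv_l u v : D (u ++ v) -> D (winv u ++ u ++ v) /\ Pi (winv u ++ u ++ v) = Pi v.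
Proof.
move=> Duv; have Dinv := dom_winv_cat Duv; rewrite winv_cat -catA in Dinv.
have Duuv := dom_catr Dinv; split => //.
rewrite catA -[_ ++ v]cat0s (@prod_assoc [::]) /= -?catA //.
rewrite prod_winv_cat ?prod_one_cons //; [exact: dom_catr Duv | exact: dom_catl Duv].
Qed.

Lemma cancel_winv_r u v : D (u ++ v) -> D (u ++ v ++ winv v) /\ Pi (u ++ v ++ winv v) = Pi u.
Proof.
move=> Duv; have Dinv := dom_cat_winv Duv; rewrite winv_cat -!catA in Dinv.
have Duvv : D (u ++ v ++ winv v) by apply: (@dom_catl _ (winv u)); rewrite -!catA.
split => //; have Esplit : u ++ v ++ winv v = u ++ (v ++ winv v) ++ [::] by rewrite cats0.
rewrite Esplit prod_assoc -?Esplit // prod_cat_winv; last exact: dom_catr Duv.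
have Du0 : D (u ++ [::]) by rewrite cats0; exact: dom_catl Duv.
by have [_] := insert_one Du0; rewrite !cats0.
Qed.

Lemma prod_winv w : D w -> Pi (winv w) = inv (Pi w).
Proof.
move=> Dw; set g := Pi w; set h := Pi (winv w).
have Dwi : D ([::] ++ w ++ winv w) by exact: dom_cat_winv.
have Dgi : D ([:: g] ++ winv w ++ [::]) by rewrite cats0; exact: dom_assoc Dwi.
have Dgh : D [:: g; h] by exact: dom_assoc Dgi.
have Pgh : Pi [:: g; h] = one.
  by rewrite -(prod_assoc Dgi) cats0 -(prod_assoc Dwi) prod_cat_winv.
have [Dcan] := @cancel_winv_l [:: g] [:: h] Dgh.
rewrite pg_prod_letter /winv /= => <-; rewrite /winv /= in Dcan.
rewrite -[[:: _; _; _]]/([:: inv g] ++ [:: g; h] ++ [::]).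
by rewrite prod_assoc //= Pgh prod_pair_one.
Qed.

Lemma inv_one : inv one = one.
Proof. by have := prod_winv dom_nil. Qed.

Lemma prod_inv_letter x : Pi [:: inv x; x] = one.
Proof. exact: (prod_winv_cat (pg_dom_letter x)). Qed.

Lemma prod_letter_inv x : Pi [:: x; inv x] = one.
Proof. exact: (prod_cat_winv (pg_dom_letter x)). Qed.

Lemma prod_rcancel a b z : D [:: a; z] -> D [:: b; z] -> Pi [:: a; z] = Pi [:: b; z] -> a = b.
Proof.
move=> Da Db Eab.
have [Da' Pa] := @cancel_winv_r [:: a] [:: z] Da.
have [Db' Pb] := @cancel_winv_r [:: b] [:: z] Db.
rewrite pg_prod_letter in Pa; rewrite pg_prod_letter in Pb.
rewrite -Pa -Pb (prod_assoc (u := [::]) (v := [:: a; z]) Da').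
by rewrite (prod_assoc (u := [::]) (v := [:: b; z]) Db') Eab.
Qed.

Lemma size_face i (w : seq L) : 0 < size w -> i <= size w -> size (face i w) = (size w).-1.
Proof.
move=> w0 iw; rewrite /face; case: eqP => [_|i0]; first by rewrite size_behead.
case: eqP => [_|iS]; first by rewrite size_take; case: ifP => //; lia.
by rewrite size_cat /= size_take size_drop; case: ifP; lia.
Qed.

Lemma nth_face i (w : seq L) j : 0 < size w -> i <= size w -> j < (size w).-1 ->
  nth one (face i w) j = if j.+1 < i then nth one w j
    else if (j.+1 == i) && (i < size w) then Pi [:: nth one w j; nth one w j.+1]
    else nth one w j.+1.
Proof.
move=> w0 iw jw; rewrite /face; case: eqP => [->|i0]; first by rewrite nth_behead.
case: eqP => [iS|iS].
  by rewrite nth_take // iS ifT //; lia.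
rewrite nth_cat size_take.
have -> : (if i.-1 < size w then i.-1 else size w) = i.-1 by rewrite ifT //; lia.
case: ltnP => ji; first by rewrite nth_take // ifT //; lia.
have -> : drop i.-1 w = nth one w i.-1 :: nth one w i :: drop i.+1 w.
  rewrite (drop_nth one); last lia.
  by rewrite (drop_nth one) prednK //; lia.
case: (ltngtP j i.-1) => [|ij|ij]; first lia.
- rewrite !ifF; try lia.
  by rewrite -[j - i.-1]prednK ?subn_gt0 //= nth_drop; congr nth; lia.
- by rewrite ij subnn /= ifF ?ifT ?take0 ?prednK //; lia.
Qed.

Lemma face_split i (w : seq L) : 0 < i < size w ->
  w = take i.-1 w ++ take 2 (drop i.-1 w) ++ drop 2 (drop i.-1 w)
  /\ face i w = take i.-1 w ++ Pi (take 2 (drop i.-1 w)) :: drop 2 (drop i.-1 w).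
Proof.
move=> /andP[i0 iw]; rewrite !cat_take_drop; split => //.
rewrite /face !ifF ?drop_drop; try lia.
by congr (_ ++ _ :: drop _ w); lia.
Qed.

Lemma dom_face i (w : seq L) : D w -> i <= size w -> D (face i w).
Proof.
move=> Dw iw; rewrite /face; case: eqP => [_|i0].
  by case: w Dw {iw} => [|x w] Dw /=; [exact: dom_nil | exact: (@dom_catr [:: x])].
case: eqP => [_|iS]; first by apply: (@dom_catl _ (drop (size w).-1 w)); rewrite cat_take_drop.
have [Ew Ef] := @face_split i w (ltac:(lia)); rewrite /face !ifF in Ef; try lia.
by rewrite Ef; apply: dom_assoc; rewrite -Ew.
Qed.

Lemma prod_face i (w : seq L) : D w -> 0 < i < size w -> Pi (face i w) = Pi w.
Proof. by move=> Dw /face_split [Ew ->]; rewrite Ew in Dw; rewrite -(prod_assoc Dw) -Ew. Qed.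

Lemma face0 (w : seq L) : face 0 w = behead w. Proof. by []. Qed.

Lemma face_size (w : seq L) : 0 < size w -> face (size w) w = take (size w).-1 w.
Proof. by rewrite /face eqxx; case: eqP => // ->. Qed.

Lemma face0_map (h : L -> L) (w : seq L) : face 0 (map h w) = map h (face 0 w).
Proof. by rewrite !face0 behead_map. Qed.

Lemma face_size_map (h : L -> L) (w : seq L) : 0 < size w ->
  face (size w) (map h w) = map h (face (size w) w).
Proof. by move=> w0; rewrite -{1}(size_map h) !face_size ?size_map // map_take. Qed.

Lemma eq_from_outer_faces (u v : seq L) : size u = size v -> 1 < size u ->
  face 0 u = face 0 v -> face (size u) u = face (size v) v -> u = v.
Proof.
move=> Euv u1; rewrite !face_size -?Euv; try lia.
case: u v Euv u1 => [|x u] [|y v] //= _ u1; rewrite !face0 /= => <-.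
by case: u u1 => [|z u] //= _ [->].
Qed.

Lemma size_degen i (w : seq L) : size (degen i w) = (size w).+1.
Proof. by rewrite /degen size_cat /= addnS -size_cat cat_take_drop. Qed.

Lemma nth_degen i (w : seq L) j : i <= size w ->
  nth one (degen i w) j = if j < i then nth one w j else if j == i then one else nth one w j.-1.
Proof.
move=> iw; rewrite /degen nth_cat size_take.
have -> : (if i < size w then i else size w) = i by case: ifP; lia.
case: ltnP => ji; first by rewrite nth_take.
case: eqP => [->|ij]; first by rewrite subnn.
by rewrite -[j - i]prednK ?subn_gt0 /= ?nth_drop; [congr nth|]; lia.
Qed.

Lemma dom_degen i (w : seq L) : D w -> D (degen i w).
Proof. by move=> Dw; have [] := @insert_one (take i w) (drop i w); rewrite ?cat_take_drop. Qed.

Lemma prod_degen i (w : seq L) : D w -> Pi (degen i w) = Pi w.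
Proof. by move=> Dw; have [] := @insert_one (take i w) (drop i w); rewrite ?cat_take_drop. Qed.

Lemma omega0 eta (w : seq L) : omega eta w 0 = eta :: w.
Proof. by rewrite /omega take0 drop0. Qed.

Lemma size_omega eta (w : seq L) i : i <= size w -> size (omega eta w i) = (size w).+1.
Proof. by move=> iw; rewrite /omega size_cat size_map /= size_take size_drop; case: ifP; lia. Qed.

Lemma nth_omega eta (w : seq L) i j : i <= size w ->
  nth one (omega eta w i) j =
   if j < i then conj eta (nth one w j) else if j == i then eta else nth one w j.-1.
Proof.
move=> iw; rewrite /omega nth_cat size_map size_take.
have -> : (if i < size w then i else size w) = i by case: ifP; lia.
case: ltnP => ji; first by rewrite (nth_map one) ?nth_take // size_take; case: ifP; lia.
case: eqP => [->|ij]; first by rewrite subnn.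
by rewrite -[j - i]prednK ?subn_gt0 /= ?nth_drop; [congr nth|]; lia.
Qed.

Lemma simplicial_letter (f : seq L -> seq L) x : simplicial_map f -> exists y, f [:: x] = [:: y].
Proof.
by case=> fD _ _; have [_] := fD _ (pg_dom_letter x); case: (f [:: x]) => [|y []] //; exists y.
Qed.

Lemma simplicial_map_letters (f : seq L -> seq L) (h : L -> L) : simplicial_map f ->
  (forall x, f [:: x] = [:: h x]) -> forall w, D w -> f w = map h w.
Proof.
move=> fS fh w; have [fD fface _] := fS.
elim: {w}(size w) {-2}w (erefl (size w)) => [|[|n] IH] w Sw Dw.
- by case: w Sw Dw => // _ Dw; have [_] := fD _ Dw; case: (f [::]).
- by case: w Sw Dw => [|x []] // _ _.
have [_ Sf] := fD _ Dw.
apply: eq_from_outer_faces; rewrite ?size_map ?Sf ?Sw //.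
  by rewrite -fface ?Sw // face0_map IH ?size_face ?Sw //; apply: dom_face.
by rewrite -Sw face_size_map -?fface ?Sw // IH ?size_face ?Sw //; apply: dom_face; rewrite ?Sw.
Qed.

Definition omega_stable (eta : L) : Prop := forall w, D w ->
  (forall i, i <= size w -> D (omega eta w i)) /\
  (forall i j, i <= size w -> j <= size w -> Pi (omega eta w i) = Pi (omega eta w j)).

Section OmegaStable.
Variable eta : L.
Hypothesis eta_stable : omega_stable eta.
Local Notation c := (conj eta).

Lemma dom_eta_cons w : D w -> D (eta :: w).
Proof. by case/eta_stable => /(_ 0 isT); rewrite omega0. Qed.

Lemma dom_letter_inv_eta x : D [:: x; inv eta].
Proof. by have := dom_winv (dom_eta_cons (pg_dom_letter (inv x))); rewrite /winv /= pg_invK. Qed.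

Lemma dom_conj_word x : D [:: eta; x; inv eta].
Proof. exact/dom_eta_cons/dom_letter_inv_eta. Qed.

Lemma conj_eta_commute x : D [:: c x; eta] /\ Pi [:: c x; eta] = Pi [:: eta; x].
Proof.
have [Dom Pom] := eta_stable (pg_dom_letter x).
by have := Pom 1 0 isT isT; have := Dom 1 isT; rewrite omega0 /omega /=.
Qed.

Lemma conj1 : c one = one.
Proof.
have [Dc Pc] := conj_eta_commute one.
by apply: (prod_rcancel Dc (dom_one_pair eta)); rewrite Pc prod_pair_one prod_one_pair.
Qed.

Lemma prod_eta_assoc x y : D [:: x; y] -> Pi [:: Pi [:: eta; x]; y] = Pi [:: eta; Pi [:: x; y]].
Proof.
move=> Dxy; have Dexy : D ([:: eta] ++ [:: x; y] ++ [::]) by exact: dom_eta_cons.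
by rewrite -(@prod_assoc [::] [:: eta; x] [:: y]) // (prod_assoc Dexy).
Qed.

Lemma prod_conj_eta x y : D [:: x; y] ->
  Pi [:: c x; Pi [:: eta; y]] = Pi [:: eta; Pi [:: x; y]].
Proof.
move=> Dxy; have [Dom Pom] := eta_stable Dxy.
have Dcey : D ([:: c x] ++ [:: eta; y] ++ [::]) by exact: Dom 1 isT.
have Dexy : D ([:: eta] ++ [:: x; y] ++ [::]) by exact: dom_eta_cons.
by rewrite -(prod_assoc Dcey) (Pom 1 0 isT isT) omega0 (prod_assoc Dexy).
Qed.

Lemma conjM x y : D [:: x; y] -> c (Pi [:: x; y]) = Pi [:: c x; c y].
Proof.
move=> Dxy; have [Dom Pom] := eta_stable Dxy.
have Dcce : D ([::] ++ [:: c x; c y] ++ [:: eta]) by exact: Dom 2 isT.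
have [Dc Pc] := conj_eta_commute (Pi [:: x; y]).
apply: (prod_rcancel Dc (dom_assoc Dcce)).
rewrite Pc -(prod_assoc Dcce) /= -[[:: c x; c y; eta]]/(omega eta [:: x; y] 2).
by rewrite (Pom 2 0 isT isT) omega0 (@prod_assoc [:: eta] [:: x; y] [::]) //; exact: dom_eta_cons.
Qed.

Lemma conjK x : conj (inv eta) (c x) = x.
Proof.
have Dxie : D [:: x; inv eta; eta].
  have := dom_cat_winv (dom_letter_inv_eta x); rewrite /winv /= pg_invK.
  exact: (@dom_catl [:: _; _; _] [:: _]).
have [Dcan Pcan] := @cancel_winv_l [:: eta] [:: x; inv eta; eta] (dom_eta_cons Dxie).
rewrite /winv /= in Dcan Pcan.
rewrite /conj pg_invK -(@prod_assoc [:: inv eta] [:: eta; x; inv eta] [:: eta]) //= Pcan.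
by rewrite (@prod_assoc [:: x] [:: inv eta; eta] [::]) //= prod_inv_letter prod_pair_one.
Qed.

End OmegaStable.

(* [c] stands for conjugation by [eta]; keeping it abstract lets [homotopy_wordE] describe an
   arbitrary homotopy before its letter map is identified with conjugation. *)
Definition homotopy_word (eta : L) (c : L -> L) (w : seq L) (k : nat) : seq L :=
  mkseq (fun j => if j.+1 < k then c (nth one w j)
                  else if j.+1 == k then Pi [:: eta; nth one w j] else nth one w j) (size w).

Lemma size_homotopy_word eta c w k : size (homotopy_word eta c w k) = size w.
Proof. exact: size_mkseq. Qed.

Lemma nth_homotopy_word eta c w k j : j < size w -> nth one (homotopy_word eta c w k) j =
  if j.+1 < k then c (nth one w j)
  else if j.+1 == k then Pi [:: eta; nth one w j] else nth one w j.
Proof. exact: nth_mkseq. Qed.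

Lemma homotopy_word_outer_face eta c w k i : 0 < size w -> (i == 0) || (i == size w) ->
  homotopy_word eta c (face i w) (if i < k then k.-1 else k) = face i (homotopy_word eta c w k).
Proof.
move=> w0 iout; have iw : i <= size w by case/orP: iout => /eqP ->.
apply: (@eq_from_nth _ one); first by rewrite size_homotopy_word !size_face ?size_homotopy_word.
move=> j; rewrite size_homotopy_word size_face // => jw.
rewrite nth_homotopy_word ?size_face // nth_face ?size_homotopy_word //.
rewrite nth_face ?size_homotopy_word // !nth_homotopy_word; try lia.
case: (ltnP i k) => ik; case/orP: iout => /eqP iE; subst i.
all: by repeat (case: ifP => //=; intros); lia.
Qed.

Lemma homotopy_word_omega eta w k : k <= (size w).+1 ->
  homotopy_word eta (conj eta) w k = face k (omega eta w k.-1).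
Proof.
move=> kw; apply: (@eq_from_nth _ one).
  by rewrite size_homotopy_word size_face ?size_omega //; lia.
move=> j; rewrite size_homotopy_word => jw.
rewrite nth_homotopy_word // nth_face ?size_omega //; try lia.
by rewrite !nth_omega; try lia; repeat (case: ifP => //=; intros); lia.
Qed.

Lemma dom_pair_nth (w : seq L) j : D w -> j.+1 < size w -> D [:: nth one w j; nth one w j.+1].
Proof.
move=> Dw jw; have Ew : w = take j w ++ [:: nth one w j; nth one w j.+1] ++ drop j.+2 w.
  by rewrite -{1}(cat_take_drop j w) (drop_nth one) 1?(drop_nth one) //; lia.
by rewrite Ew in Dw; move/dom_catr/dom_catl: Dw.
Qed.

Section ConjHomotopy.
Variable eta : L.
Hypothesis eta_stable : omega_stable eta.
Local Notation c := (conj eta).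

Lemma homotopy_word_face w k i : D w -> 0 < size w -> k <= (size w).+1 -> i <= size w ->
  homotopy_word eta c (face i w) (if i < k then k.-1 else k) = face i (homotopy_word eta c w k).
Proof.
move=> Dw w0 kw iw; have [iout|] := boolP ((i == 0) || (i == size w)).
  exact: homotopy_word_outer_face.
move/norP => [/eqP i0 /eqP iS].
apply: (@eq_from_nth _ one); first by rewrite size_homotopy_word !size_face ?size_homotopy_word.
move=> j; rewrite size_homotopy_word size_face // => jw.
rewrite nth_homotopy_word ?size_face // nth_face ?size_homotopy_word //.
rewrite nth_face ?size_homotopy_word // !nth_homotopy_word; try lia.
have Dj : D [:: nth one w j; nth one w j.+1] by apply: dom_pair_nth => //; lia.
case: (ltnP i k) => ik; repeat (case: ifP => //=; intros); try lia.
- by rewrite conjM.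
- by rewrite prod_conj_eta.
- by rewrite prod_eta_assoc.
Qed.

Lemma homotopy_word_degen w k i : k <= (size w).+1 -> i <= size w ->
  homotopy_word eta c (degen i w) (if i < k then k.+1 else k) = degen i (homotopy_word eta c w k).
Proof.
move=> kw iw; apply: (@eq_from_nth _ one).
  by rewrite size_homotopy_word !size_degen size_homotopy_word.
move=> j; rewrite size_homotopy_word size_degen => jw.
rewrite nth_homotopy_word ?size_degen // nth_degen ?size_homotopy_word // nth_degen //.
case: (ltnP i k) => ik; repeat (case: ifP => //=; intros); try lia.
all: rewrite ?nth_homotopy_word; try lia.
all: repeat (case: ifP => //=; intros); try lia.
all: by rewrite ?conj1 ?prod_pair_one ?size_homotopy_word.
Qed.

Lemma conj_homotopy : simplicial_homotopy (homotopy_word eta c) (map c) id.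
Proof.
split.
- move=> w k Dw kw; rewrite size_homotopy_word homotopy_word_omega //; split => //.
  apply: dom_face; last by rewrite size_omega //; lia.
  by have [Dom _] := eta_stable Dw; apply: Dom; lia.
- move=> w Dw; apply: (@eq_from_nth _ one); first by rewrite size_homotopy_word size_map.
  move=> j; rewrite size_homotopy_word => jw.
  by rewrite nth_homotopy_word // (nth_map one) // ifT.
- move=> w Dw; apply: (@eq_from_nth _ one); first by rewrite size_homotopy_word.
  by move=> j; rewrite size_homotopy_word => jw; rewrite nth_homotopy_word.
- move=> w k i Dw w0 kw iw; exact: homotopy_word_face.
- move=> w k i Dw kw iw; exact: homotopy_word_degen.
Qed.

End ConjHomotopy.

Lemma simplicial_map_comp (f g : seq L -> seq L) : simplicial_map f -> simplicial_map g ->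
  simplicial_map (f \o g).
Proof.
case=> fD fface fdegen [gD gface gdegen]; split => /= [w Dw|w i Dw w0 iw|w i Dw iw].
- by have [Dg <-] := gD w Dw; exact: fD.
- by have [Dg Sg] := gD w Dw; rewrite gface // fface // Sg.
- by have [Dg Sg] := gD w Dw; rewrite gdegen // fdegen // Sg.
Qed.

Lemma automorphism_ext (a f : seq L -> seq L) : automorphism a ->
  (forall w, D w -> a w = f w) -> automorphism f.
Proof.
case=> [[aD aface adegen] [g [[gD gface gdegen] ga ag]]] Eaf.
split; first split.
- by move=> w Dw; rewrite -Eaf //; exact: aD.
- by move=> w i Dw w0 iw; rewrite -!Eaf ?aface //; exact: dom_face.
- by move=> w i Dw iw; rewrite -!Eaf ?adegen //; exact: dom_degen.
exists g; split => // [w Dw|w Dw]; first by rewrite -Eaf ?ga.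
by rewrite -Eaf ?ag //; case: (gD w Dw).
Qed.

Lemma automorphism_comp (f g : seq L -> seq L) : automorphism f -> automorphism g ->
  automorphism (f \o g).
Proof.
case=> fS [f' [f'S f'f ff']] [gS [g' [g'S g'g gg']]].
split; first exact: simplicial_map_comp.
exists (g' \o f'); split => /= [|w Dw|w Dw]; first exact: simplicial_map_comp.
- by case: gS => gD _ _; have [Dg _] := gD w Dw; rewrite f'f // g'g.
- by case: f'S => f'D _ _; have [Df' _] := f'D w Dw; rewrite gg' // ff'.
Qed.

Lemma automorphism_id : automorphism (@id (seq L)).
Proof. by split; [|exists id]; split. Qed.

Lemma normalizer_stable (eta : L) : normalizer eta -> omega_stable eta.
Proof. by case. Qed.

Lemma normalizer_aut (eta : L) : normalizer eta -> automorphism (map (conj eta)).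
Proof.
case=> _ [a [aA aconj]] _; apply: (automorphism_ext aA) => w.
by case: aA => aS _; exact: simplicial_map_letters.
Qed.

Lemma normalizer_of_stable (eta : L) : omega_stable eta -> automorphism (map (conj eta)) ->
  normalizer eta.
Proof. by move=> eta_stable cA; split => //; [exact: dom_conj_word | exists (map (conj eta))]. Qed.

Lemma homotopy_word_degen_succ eta c (w : seq L) i : i <= size w ->
  homotopy_word eta c (degen i w) i.+1 = map c (take i w) ++ eta :: drop i w.
Proof.
move=> iw; apply: (@eq_from_nth _ one).
  by rewrite size_homotopy_word size_degen size_cat size_map /= size_take size_drop; case: ifP; lia.
move=> j; rewrite size_homotopy_word size_degen => jw.
rewrite nth_homotopy_word ?size_degen // nth_degen // nth_cat size_map size_take.
have -> : (if i < size w then i else size w) = i by case: ifP; lia.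
case: (ltnP j i) => ji; first by rewrite ifT // (nth_map one) ?nth_take // size_take; case: ifP; lia.
case: eqP => [->|ij]; first by rewrite subnn ltnn eqxx prod_pair_one.
rewrite !ifF; try lia.
by rewrite -[j - i]prednK ?subn_gt0 /= ?nth_drop; [congr nth|]; lia.
Qed.

Section InnerAutomorphism.
Variables (a : seq L -> seq L) (F : seq L -> nat -> seq L).
Hypotheses (aA : automorphism a) (aF : simplicial_homotopy F a id).

Let eta := head one (F [:: one] 1).
Let alpha x := head one (a [:: x]).

Lemma inner_letter x : a [:: x] = [:: alpha x].
Proof. by case: aA => aS _; have [y Ey] := simplicial_letter x aS; rewrite /alpha Ey. Qed.

Lemma homotopy_edge x : F [:: x] 1 = [:: Pi [:: eta; x]].
Proof.
have [FD _ Fid Fface _] := aF; have Dx := dom_one_pair x.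
have := Fface _ 1 0 Dx isT isT isT; have := Fface _ 1 2 Dx isT isT isT.
have := Fface _ 1 1 Dx isT isT isT.
rewrite /face /= Fid ?prod_one_pair; last exact: pg_dom_letter.
have [_] := FD _ 1 Dx isT; rewrite /eta.
by case: (F [:: one; x] 1) => [|p [|q []]] //= _ -> -> [->].
Qed.

Lemma homotopy_wordE n w k : size w = n.+1 -> D w -> k <= n.+2 ->
  F w k = homotopy_word eta alpha w k.
Proof.
have [FD Fa Fid Fface _] := aF.
elim: n w k => [|n IH] w k Sw Dw kn.
  case: w Sw Dw => [|x []] // _ Dx.
  case: k kn => [|[|[|]]] // _; first by rewrite Fid.
    by rewrite homotopy_edge.
  by rewrite Fa // inner_letter.
have [_ SF] := FD _ k Dw (ltac:(by rewrite Sw)).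
have outer i : i <= n.+2 -> (i == 0) || (i == n.+2) -> face i (F w k) = face i (homotopy_word eta alpha w k).
  move=> iw iout; rewrite -Fface ?Sw // -homotopy_word_outer_face ?Sw //.
  apply: IH; [by rewrite size_face ?Sw | apply: dom_face => //; lia | case: ifP; lia].
apply: eq_from_outer_faces; rewrite ?size_homotopy_word ?SF ?Sw //.
all: by apply: outer; rewrite ?eqxx ?orbT.
Qed.

Lemma dom_alpha_omega w i : D w -> i <= size w -> D (map alpha (take i w) ++ eta :: drop i w).
Proof.
move=> Dw iw; have Dd := dom_degen i Dw; have kd : i.+1 <= (size w).+2 by lia.
rewrite -homotopy_word_degen_succ // -(homotopy_wordE (size_degen i w) Dd kd).
by have [FD _ _ _ _] := aF; case: (FD _ i.+1 Dd); rewrite // size_degen; lia.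
Qed.

Lemma alpha_eta_commute x : D [:: alpha x; eta] /\ Pi [:: alpha x; eta] = Pi [:: eta; x].
Proof.
split; first exact: (@dom_alpha_omega [:: x] 1 (pg_dom_letter x)).
have [_ _ _ Fface _] := aF; have [Dx _] := @insert_one [:: x] [::] (pg_dom_letter x).
have := Fface _ 2 1 Dx isT isT isT.
have -> : face 1 [:: x; one] = [:: x] by rewrite /face /= prod_pair_one.
rewrite homotopy_edge (@homotopy_wordE 1 [:: x; one]) //.
by rewrite /homotopy_word /face /= prod_pair_one => -[->].
Qed.

Lemma alphaE x : alpha x = conj eta x.
Proof.
have Dxi : D [:: x; inv eta].
  by have := dom_winv (@dom_alpha_omega [:: inv x] 0 (pg_dom_letter _) isT); rewrite /winv /= pg_invK.
have [Dc Pc] := alpha_eta_commute x.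
have [Dcan Pcan] := @cancel_winv_r [:: alpha x] [:: eta] Dc.
rewrite pg_prod_letter /winv /= in Dcan Pcan.
rewrite -Pcan /conj (@prod_assoc [::] [:: alpha x; eta] [:: inv eta]) //= Pc.
by rewrite -(@prod_assoc [::] [:: eta; x] [:: inv eta]) //; exact: (@dom_alpha_omega _ 0 Dxi).
Qed.

Lemma omega_alpha w i : omega eta w i = map alpha (take i w) ++ eta :: drop i w.
Proof. by rewrite /omega (eq_map alphaE). Qed.

Lemma prod_omega_succ w i : D w -> i < size w ->
  Pi (omega eta w i) = Pi (omega eta w i.+1).
Proof.
move=> Dw iw; have Dom j : j <= size w -> D (omega eta w j).
  by move=> jw; rewrite omega_alpha; exact: dom_alpha_omega.
rewrite -(@prod_face i.+1 (omega eta w i)) ?Dom ?size_omega //; try lia.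
rewrite -(@prod_face i.+1 (omega eta w i.+1)) ?Dom ?size_omega //; try lia.
congr Pi; apply: (@eq_from_nth _ one); first by rewrite !size_face ?size_omega //; lia.
move=> j; rewrite size_face ?size_omega //; try lia; move=> jw.
rewrite !nth_face ?size_omega //; try lia.
rewrite !nth_omega //; try lia.
have [_ Ecomm] := alpha_eta_commute (nth one w j); rewrite alphaE in Ecomm.
repeat (case: ifP => //=; intros); try lia.
all: by apply: Dom; lia.
Qed.

Lemma inner_omega_stable : omega_stable eta.
Proof.
move=> w Dw; split=> [i iw|]; first by rewrite omega_alpha; exact: dom_alpha_omega.
suff Pom0 i : i <= size w -> Pi (omega eta w i) = Pi (omega eta w 0).
  by move=> i j iw jw; rewrite !Pom0.
by elim: i => // i IH iw; rewrite -prod_omega_succ // IH //; lia.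
Qed.

Lemma inner_automorphism_conj :
  exists2 eta, normalizer eta & forall w, D w -> a w = map (conj eta) w.
Proof.
have aE w : D w -> a w = map (conj eta) w.
  by case: aA => aS _ Dw; rewrite (simplicial_map_letters aS inner_letter Dw) (eq_map alphaE).
exists eta => //; apply: normalizer_of_stable; first exact: inner_omega_stable.
exact: automorphism_ext aA aE.
Qed.

End InnerAutomorphism.

Section NormalizerInverse.
Variable eta : L.
Hypothesis eta_N : normalizer eta.
Local Notation c := (conj eta).
Local Notation c' := (conj (inv eta)).

Let eta_stable := normalizer_stable eta_N.

Lemma automorphism_conjV : automorphism (map c').
Proof.
have [cS [g [gS gc cg]]] := normalizer_aut eta_N.
have gE x : g [:: x] = [:: c' x].
  have [z gx] := simplicial_letter x gS; have := cg _ (pg_dom_letter x).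
  by rewrite gx => -[<-]; rewrite conjK.
apply: (@automorphism_ext g); last by move=> w; exact: simplicial_map_letters.
by split=> //; exists (map c).
Qed.

Lemma conjVK x : c (c' x) = x.
Proof.
have [_ [g [gS _ cg]]] := normalizer_aut eta_N.
have [z gx] := simplicial_letter x gS; have := cg _ (pg_dom_letter x).
by rewrite gx => -[Ecz]; rewrite -Ecz conjK.
Qed.

Lemma dom_map_conjV w : D w -> D (map c' w).
Proof. by case: automorphism_conjV => [[cD _ _] _] /cD []. Qed.

Lemma dom_letter_eta z : D [:: z; eta].
Proof. by rewrite -(conjVK z); case: (conj_eta_commute eta_stable (c' z)). Qed.

Lemma dom_inv_eta_letter z : D [:: inv eta; z].
Proof. by have := dom_winv (dom_letter_eta (inv z)); rewrite /winv /= pg_invK. Qed.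

Lemma conj_inv_eta : c (inv eta) = inv eta.
Proof.
have Dw : D ([::] ++ [:: eta; inv eta] ++ [:: inv eta]) by exact: dom_conj_word.
by rewrite /conj (prod_assoc Dw) /= prod_letter_inv prod_one_pair.
Qed.

Lemma dom_conjV_word y : D [:: inv eta; y; eta].
Proof.
have [Dom _] := eta_stable (dom_inv_eta_letter (c' y)).
by have := Dom 2 isT; rewrite /omega /= conj_inv_eta conjVK.
Qed.

Lemma inv_conjV x : inv (c' (inv x)) = c' x.
Proof.
rewrite /conj -prod_winv; first by rewrite /winv /= !pg_invK.
by rewrite pg_invK; exact: dom_conjV_word.
Qed.

Lemma omega_conjV w i : i <= size w ->
  omega (inv eta) w i = winv (omega eta (map c' (winv w)) (size w - i)).
Proof.
move=> iw; apply: (@eq_from_nth _ one).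
  by rewrite size_winv !size_omega ?size_map ?size_winv //; lia.
move=> j; rewrite size_omega // => jw.
rewrite nth_winv ?size_omega ?size_map ?size_winv //; try lia.
rewrite !nth_omega ?size_map ?size_winv //; try lia.
repeat (case: ifP => //=; intros); try lia.
- rewrite (nth_map one) ?size_winv ?nth_winv; try lia.
  by rewrite (_ : size w - _ = j) ?inv_conjV //; lia.
- rewrite (nth_map one) ?size_winv ?nth_winv; try lia.
  by rewrite (_ : size w - _ = j.-1) ?conjVK ?pg_invK //; lia.
Qed.

Lemma omega_stableV : omega_stable (inv eta).
Proof.
move=> w Dw; have [Dom Pom] := eta_stable (dom_map_conjV (dom_winv Dw)).
rewrite size_map size_winv in Dom Pom.
split=> [i iw|i j iw jw]; rewrite !omega_conjV //; first by apply/dom_winv/Dom/leq_subr.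
by rewrite !prod_winv ?(Pom (size w - i) (size w - j)) ?leq_subr //; apply/Dom/leq_subr.
Qed.

Lemma normalizerV : normalizer (inv eta).
Proof. exact: normalizer_of_stable omega_stableV automorphism_conjV. Qed.

End NormalizerInverse.

Section NormalizerProduct.
Variables eta theta : L.
Hypotheses (eta_stable : omega_stable eta) (theta_stable : omega_stable theta).
Local Notation rho := (Pi [:: eta; theta]).

Lemma conj_prod x : conj rho x = conj eta (conj theta x).
Proof.
have Detx : D [:: eta; theta; inv x] by exact/(dom_eta_cons eta_stable)/(dom_eta_cons theta_stable)/pg_dom_letter.
have Dxtie : D [:: x; inv theta; inv eta] by have := dom_winv Detx; rewrite /winv /= pg_invK.
have Dw : D [:: eta; theta; x; inv theta; inv eta].
  exact/(dom_eta_cons eta_stable)/(dom_eta_cons theta_stable).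
have Dcut : D ([::] ++ [:: eta; theta] ++ [:: x; inv theta; inv eta]) by [].
have Dcut' : D ([:: rho; x] ++ [:: inv theta; inv eta] ++ [::]) by exact: dom_assoc Dcut.
have Erho : Pi [:: inv theta; inv eta] = inv rho.
  by rewrite -(prod_winv (dom_eta_cons eta_stable (pg_dom_letter theta))).
rewrite /conj -(@prod_assoc [:: eta] [:: theta; x; inv theta] [:: inv eta]) //=.
by rewrite (prod_assoc Dcut) /= (prod_assoc Dcut') /= Erho.
Qed.

Lemma omega_prod w i : i <= size w ->
  omega rho w i = face i.+1 (omega eta (omega theta w i) i).
Proof.
move=> iw; apply: (@eq_from_nth _ one).
  by rewrite size_face !size_omega ?size_omega //; lia.
move=> j; rewrite size_omega // => jw.
rewrite nth_face ?size_omega ?size_omega //; try lia.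
rewrite !nth_omega ?size_omega //; try lia.
by repeat (case: ifP => //=; intros); rewrite ?conj_prod //; lia.
Qed.

Lemma omega_stable_prod : omega_stable rho.
Proof.
move=> w Dw; have [Dt Pt] := theta_stable Dw.
have Dw' i : i <= size w -> D (omega eta (omega theta w i) i).
  by move=> iw; have [De _] := eta_stable (Dt i iw); apply: De; rewrite size_omega //; lia.
have Pw i : i <= size w -> Pi (omega rho w i) = Pi [:: eta; Pi (theta :: w)].
  move=> iw; rewrite omega_prod // (prod_face (Dw' i iw)) ?size_omega ?size_omega //; try lia.
  have [_ Pe] := eta_stable (Dt i iw); rewrite (Pe i 0) ?size_omega //; try lia.
  rewrite omega0 prod_cons ?(Pt i 0) ?omega0 //; exact: dom_eta_cons (Dt i iw).
split=> [i iw|i j iw jw]; last by rewrite !Pw.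
by rewrite omega_prod //; apply: dom_face; [exact: Dw' | rewrite !size_omega ?size_omega //; lia].
Qed.

End NormalizerProduct.

Lemma normalizerM (eta theta : L) : normalizer eta -> normalizer theta ->
  normalizer (Pi [:: eta; theta]).
Proof.
move=> etaN thetaN; have eta_stable := normalizer_stable etaN.
have theta_stable := normalizer_stable thetaN.
apply: normalizer_of_stable; first exact: omega_stable_prod.
apply: (automorphism_ext (automorphism_comp (normalizer_aut etaN) (normalizer_aut thetaN))).
by move=> w _ /=; rewrite -map_comp; apply: eq_map => x; rewrite /= conj_prod.
Qed.

Lemma conj_one x : conj one x = x.
Proof.
have Dw : D ([::] ++ [:: one; x] ++ [:: one]).
  by have [] := @insert_one [:: one; x] [::] (dom_one_pair x).
by rewrite /conj inv_one (prod_assoc Dw) /= prod_one_pair prod_pair_one.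
Qed.

Lemma normalizer1 : normalizer one.
Proof.
have omega_one w i : omega one w i = degen i w by rewrite /omega /degen (eq_map conj_one) map_id.
apply: normalizer_of_stable.
  move=> w Dw; split=> [i _|i j _ _]; rewrite !omega_one; first exact: dom_degen.
  by rewrite !prod_degen.
by apply: (automorphism_ext automorphism_id) => w _; rewrite (eq_map conj_one) map_id.
Qed.

Lemma all_in_sub (P Q : L -> Prop) w : (forall x, P x -> Q x) -> all_in P w -> all_in Q w.
Proof. by move=> PQ; elim: w => //= x w IH [/PQ Qx /IH]. Qed.

Lemma dom_normalizer_word w : all_in (@normalizer M) w -> D w.
Proof.
elim: w => [_|x w IH [xN /IH Dw]]; first exact: dom_nil.
exact: (dom_eta_cons (normalizer_stable xN) Dw).
Qed.

Lemma normalizer_prod w : all_in (@normalizer M) w -> normalizer (Pi w).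
Proof.
elim: w => [_|x w IH wN]; first exact: normalizer1.
rewrite prod_cons; last exact: dom_normalizer_word.
by case: wN => xN /IH; exact: normalizerM.
Qed.

Lemma normalizer_subgroup : subgroup (@normalizer M).
Proof. by split=> [w|w|x]; [exact: dom_normalizer_word | exact: normalizer_prod | exact: normalizerV]. Qed.

Lemma center_normalizer (x : L) : center x -> normalizer x.
Proof. by case. Qed.

Lemma center_prod w : all_in (@center M) w -> center (Pi w).
Proof.
elim: w => [_|x w IH [xZ wZ]]; first by split; [exact: normalizer1 | exact: conj_one].
have [[xN xC] [wN wC]] := (xZ, IH wZ).
have Dxw : D (x :: w).
  by apply: dom_normalizer_word; split=> //; exact: (all_in_sub (@center_normalizer) wZ).
rewrite prod_cons //; split=> [|y]; first exact: normalizerM.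
by rewrite conj_prod ?wC ?xC //; exact: normalizer_stable.
Qed.

Lemma center_subgroup : subgroup (@center M).
Proof.
split=> [w /(all_in_sub (@center_normalizer))|w|x [xN xC]]; first exact: dom_normalizer_word.
  exact: center_prod.
split=> [|y]; first exact: normalizerV.
by rewrite -{1}(xC y) conjK //; exact: normalizer_stable.
Qed.

Lemma center_commute (x y : L) : center x -> Pi [:: x; y] = Pi [:: y; x].
Proof. by case=> xN xC; have [_ <-] := conj_eta_commute (normalizer_stable xN) y; rewrite xC. Qed.

Lemma conj_center (eta : L) : normalizer eta ->
  center eta <-> forall w, D w -> map (conj eta) w = w.
Proof.
move=> etaN; split=> [[_ etaC] w _|etaC]; first by rewrite (eq_map etaC) map_id.
by split=> // x; case: (etaC _ (pg_dom_letter x)).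
Qed.

End PartialGroupTheory.

Theorem lemma5p7 (M : partialGroup) :
  subgroup (@normalizer M) /\
  abelian_subgroup (@center M) /\
  exists phi : M -> seq M -> seq M,
    [/\ (forall eta, normalizer eta -> inner_aut (phi eta)),
        (forall eta theta, normalizer eta -> normalizer theta ->
           forall w, pg_dom w ->
             phi (pg_prod [:: eta; theta]) w = phi eta (phi theta w)),
        (forall a, inner_aut a ->
           exists2 eta, normalizer eta & forall w, pg_dom w -> a w = phi eta w) &
        (forall eta, normalizer eta ->
           (center eta <-> forall w, pg_dom w -> phi eta w = w))].
Proof.
split; first exact: normalizer_subgroup.
split; first by split=> [|x y xZ _]; [exact: center_subgroup | exact: center_commute].
exists (fun eta => map (conj eta)); split.
- move=> eta etaN; split; first exact: normalizer_aut.
  by exists (homotopy_word eta (conj eta)); apply/conj_homotopy/normalizer_stable.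
- move=> eta theta etaN thetaN w _; rewrite -map_comp; apply: eq_map => x /=.
  by rewrite conj_prod //; exact: normalizer_stable.
- by move=> a [aA [F aF]]; exact: inner_automorphism_conj aA aF.
- exact: conj_center.
Qed.
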